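(* For every integer $\nu\ge0$, $$\operatorname{sech}^3(D/2)\,0^{[2\nu]}=2\tanh(D/2)\,0^{[2\nu+1]}=4\cosh(D/2)\,0^{[2\nu+2]},$$ and consequently $$4\sum_{k=1}^{\nu+1}2^{-2k}\,t(2\nu+2,2k)=\frac{(2\nu)!}{2^{2\nu}}\binom{-3/2}{\nu}.$$
   Context: Central factorials: $x^{[0]}=1$, $x^{[n]}=x\prod_{j=1}^{n-1}(x+\tfrac n2-j)$ for $n\ge1$; $t(n,k)$ is defined by $x^{[n]}=\sum_k t(n,k)x^k$. For a power series $h(D)=\sum_k h_kD^k$ (here the Taylor series at $0$ of the indicated functions of $D$), $h(D)\,0^{[n]}:=\sum_k h_k\,k!\,t(n,k)$. *)

From HB Require Import structures.
From mathcomp Require Import all_boot all_order all_algebra.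
Set Implicit Arguments. Unset Strict Implicit. Unset Printing Implicit Defensive.
Import Order.TTheory GRing.Theory Num.Theory.
Local Open Scope ring_scope.

Definition cfac (n : nat) : {poly rat} :=
  if n is 0 then 1
  else 'X * \prod_(1 <= j < n) ('X + (n%:R / 2 - j%:R)%:P).

Definition tcf (n k : nat) : rat := (cfac n)`_k.

(* A formal power series in D is given by its coefficient sequence. *)
Definition series := nat -> rat.

(* h(D) 0^{[n]} := sum_k h_k k! t(n,k)   (t(n,k) = 0 for k >= size (cfac n)) *)
Definition opApply (h : series) (n : nat) : rat :=
  \sum_(k < size (cfac n)) h k * (k`!)%:R * tcf n k.

Definition smul (a b : series) : series :=
  fun n => \sum_(i < n.+1) a i * b (n - i)%N.

Fixpoint sinv_seq (a : series) (n : nat) : seq rat :=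
  match n with
  | 0 => [:: (a 0%N)^-1]
  | m.+1 => let s := sinv_seq a m in
            rcons s (- (a 0%N)^-1 *
                     \sum_(i < m.+1) a i.+1 * nth 0 s (m - i)%N)
  end.
Definition sinv (a : series) : series := fun n => nth 0 (sinv_seq a n) n.

Definition cosh_half : series :=
  fun k => if odd k then 0 else ((2 ^ k * k`!)%N%:R)^-1.
Definition sinh_half : series :=
  fun k => if odd k then ((2 ^ k * k`!)%N%:R)^-1 else 0.

Definition sech_half : series := sinv cosh_half.
Definition tanh_half : series := smul sinh_half sech_half.
Definition sech3_half : series := smul sech_half (smul sech_half sech_half).

Definition gbinom (a : rat) (n : nat) : rat :=
  (\prod_(i < n) (a - i%:R)) / (n`!)%:R.

From HB Require Import structures.
From mathcomp Require Import all_boot all_order all_algebra.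
From mathcomp Require Import ring zify.
Import Order.TTheory GRing.Theory Num.Theory.
Local Open Scope ring_scope.

(* For a power series h, h(D) 0^{[n]} is the value at 0 of
   the polynomial h(D) x^{[n]}, and for a product of series
   (a h)(D) 0^{[n]} = h(D) (a(D) x^{[n]}) at 0, while h'(D) 0^{[n]} is the
   value at 0 of h(D) (x x^{[n]}).  By Taylor's formula cosh(D/2) and
   sinh(D/2) act as half sum and half difference of the shifts by +-1/2,
   which on central factorials gives
     x cosh(D/2) x^{[k+1]} = x^{[k+2]} + (k+1)k/4 x^{[k]},
     sinh(D/2) x^{[k+1]} = (k+1)/2 x^{[k]}.
   Each of h = sech, sech^3, cosh satisfies cosh(D/2) h' = al sinh(D/2) h
   (al = -1/2, -3/2, 1/2); these identities are checked on polynomial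
   truncations.  Applying such an equation to x^{[n+1]} yields a two-term
   recurrence for h(D) 0^{[n]}, and induction identifies the three even
   values with the closed form (2 nu)!/2^{2 nu} binom(-3/2, nu).  Finally
   tanh(D/2) 0^{[2 nu+1]} reduces to sech(D/2) 0^{[2 nu]} via sinh(D/2), and
   cosh(D/2) 0^{[2 nu+2]} is the stated sum over even coefficients. *)

(* h(D) applied to p and evaluated at 0, using the first N coefficients of h:
   since D^k x^k = k!, this is sum_k h_k k! p_k. *)
Definition evalD0 (N : nat) (h : series) (p : {poly rat}) : rat :=
  \sum_(k < N) h k * (k`!)%:R * p`_k.

Definition diffop (N : nat) (a : series) (p : {poly rat}) : {poly rat} :=
  \sum_(j < N) a j *: p^`(j).

Lemma evalD0_cfac N h n : (size (cfac n) <= N)%N -> evalD0 N h (cfac n) = opApply h n.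
Proof.
move=> hs; rewrite /evalD0 /opApply.
rewrite [RHS](big_ord_widen N (fun k => h k * (k`!)%:R * tcf n k)) // [RHS]big_mkcond /=.
apply: eq_bigr => k _; case: ifP => // /negbT.
by rewrite -leqNgt => hk; rewrite /tcf nth_default // mulr0.
Qed.

Lemma evalD0D N h p q : evalD0 N h (p + q) = evalD0 N h p + evalD0 N h q.
Proof. by rewrite /evalD0 -big_split; apply: eq_bigr => k _; rewrite coefD mulrDr. Qed.

Lemma evalD0Z N h c p : evalD0 N h (c *: p) = c * evalD0 N h p.
Proof. by rewrite /evalD0 big_distrr; apply: eq_bigr => k _; rewrite coefZ /= mulrCA. Qed.

Lemma evalD0_sum N h M (c : nat -> rat) (F : nat -> {poly rat}) :
  evalD0 N h (\sum_(i < M) c i *: F i) = \sum_(i < M) c i * evalD0 N h (F i).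
Proof.
elim: M => [|M IH]; first by rewrite !big_ord0 /evalD0 big1 // => k _; rewrite coef0 mulr0.
by rewrite !big_ord_recr /= evalD0D IH evalD0Z.
Qed.

Lemma evalD0_Xn N h n : (n < N)%N -> evalD0 N h 'X^n = h n * (n`!)%:R.
Proof.
move=> hn; rewrite /evalD0 (bigD1 (Ordinal hn)) //= coefXn eqxx mulr1 big1 ?addr0 //.
by move=> k /eqP hk; rewrite coefXn; case: eqP => [e|]; [case: hk; apply: val_inj | rewrite mulr0].
Qed.

Lemma evalD0_scale N (c : rat) h p : evalD0 N (fun j => c * h j) p = c * evalD0 N h p.
Proof. by rewrite /evalD0 big_distrr; apply: eq_bigr => k _ /=; rewrite !mulrA. Qed.

Lemma diffop_sum N a M (c : nat -> rat) (F : nat -> {poly rat}) :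
  diffop N a (\sum_(i < M) c i *: F i) = \sum_(i < M) c i *: diffop N a (F i).
Proof.
elim: M => [|M IH].
  by rewrite !big_ord0 /diffop big1 // => k _; rewrite derivn_poly0 ?size_poly0 // scaler0.
rewrite !big_ord_recr /= -IH /diffop scaler_sumr -big_split /=; apply: eq_bigr => j _.
by rewrite derivnD derivnZ scalerDr !scalerA mulrC.
Qed.

(* The monomial case of evalD0_smul: D^j x^n = n^_j x^(n-j), and
   n^_j (n-j)! = n!. *)
Lemma evalD0_diffop_Xn N a h n : (n < N)%N ->
  evalD0 N h (diffop N a 'X^n) = smul a h n * (n`!)%:R.
Proof.
move=> hn; have -> : diffop N a 'X^n = \sum_(j < N) (a j * (n ^_ j)%:R) *: 'X^(n - j).
  by apply: eq_bigr => j _; rewrite derivnXn -scaler_nat scalerA.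
rewrite (evalD0_sum N h N (fun j => a j * (n ^_ j)%:R) (fun j => 'X^(n - j))).
rewrite /smul big_distrl /=.
rewrite (big_ord_widen N (fun i => a i * h (n - i)%N * (n`!)%:R)) // [RHS]big_mkcond /=.
apply: eq_bigr => j _; rewrite evalD0_Xn; last exact: leq_ltn_trans (leq_subr _ _) hn.
case: ifP => hj; last by rewrite ffact_small ?mulr0 ?mul0r // ltnNge -ltnS hj.
by rewrite -(ffact_fact (m := j) (n := n)) // natrM; ring.
Qed.

Lemma evalD0_smul N a h (p : {poly rat}) : (size p <= N)%N ->
  evalD0 N (smul a h) p = evalD0 N h (diffop N a p).
Proof.
move=> hs; rewrite -(coefK p) poly_def.
rewrite (evalD0_sum N (smul a h) (size p) (fun i => p`_i) (fun i => 'X^i)).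
rewrite (diffop_sum N a (size p) (fun i => p`_i) (fun i => 'X^i)).
rewrite (evalD0_sum N h (size p) (fun i => p`_i) (fun i => diffop N a 'X^i)).
apply: eq_bigr => i _; have hi : (i < N)%N := leq_trans (ltn_ord i) hs.
by rewrite evalD0_diffop_Xn ?evalD0_Xn.
Qed.

Definition sder (h : series) : series := fun k => (k.+1)%:R * h k.+1.

(* h'(D) 0^p = h(D) (x p) at 0, since [D, x] = 1 and x p vanishes at 0. *)
Lemma evalD0_sder N h (p : {poly rat}) : evalD0 N (sder h) p = evalD0 N.+1 h ('X * p).
Proof.
rewrite /evalD0 big_ord_recl coefXM eqxx mulr0 add0r; apply: eq_bigr => k _.
by rewrite coefXM /= /sder factS natrM; ring.
Qed.

Lemma fact_neq0 (R : numDomainType) (j : nat) : (j`!)%:R != 0 :> R.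
Proof. by rewrite pnatr_eq0 -lt0n fact_gt0. Qed.

(* The j-th Taylor coefficient of cosh(D/2) or sinh(D/2), times j!, is 2^-j. *)
Lemma half_coefE j (y : rat) :
  ((2 ^ j * j`!)%N%:R)^-1 * (y *+ j`!) = y * (1/2) ^+ j.
Proof.
rewrite natrM natrX -mulr_natr div1r exprVn.
have h1 := fact_neq0 rat j; have h2 : (2 ^+ j) != 0 :> rat by rewrite expf_neq0.
by field; rewrite h1 h2.
Qed.

Lemma diffop_horner N a (p : {poly rat}) (x : rat) :
  (diffop N a p).[x] = \sum_(j < N) a j * ((p^`N(j)).[x] *+ j`!).
Proof.
rewrite /diffop horner_sum; apply: eq_bigr => j _.
by rewrite hornerZ nderivn_def hornerMn.
Qed.

(* Taylor's formula: cosh(D/2) and sinh(D/2) are the half sum and half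
   difference of the shifts by 1/2 and -1/2. *)
Lemma diffop_cosh_horner N (p : {poly rat}) (x : rat) : (size p <= N)%N ->
  (diffop N cosh_half p).[x] = (p.[x + 1/2] + p.[x - 1/2]) / 2.
Proof.
move=> hs; rewrite diffop_horner.
rewrite (nderiv_taylor_wide (x := x) (h := 1/2) (mulrC _ _) hs).
rewrite (nderiv_taylor_wide (x := x) (h := - (1/2)) (mulrC _ _) hs).
rewrite -big_split /= mulr_suml; apply: eq_bigr => j _.
rewrite /cosh_half exprNn -signr_odd; case: ifP => _ /=.
  by rewrite mul0r expr1; field.
by rewrite half_coefE expr0; field.
Qed.

Lemma diffop_sinh_horner N (p : {poly rat}) (x : rat) : (size p <= N)%N ->
  (diffop N sinh_half p).[x] = (p.[x + 1/2] - p.[x - 1/2]) / 2.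
Proof.
move=> hs; rewrite diffop_horner.
rewrite (nderiv_taylor_wide (x := x) (h := 1/2) (mulrC _ _) hs).
rewrite (nderiv_taylor_wide (x := x) (h := - (1/2)) (mulrC _ _) hs).
rewrite -sumrB /= mulr_suml; apply: eq_bigr => j _.
rewrite /sinh_half exprNn -signr_odd; case: ifP => _ /=.
  by rewrite half_coefE expr1; field.
by rewrite mul0r expr0; field.
Qed.

Lemma poly_horner_inj (R : numDomainType) (p q : {poly R}) :
  (forall x, p.[x] = q.[x]) -> p = q.
Proof.
move=> h; apply/eqP; rewrite -subr_eq0; apply/eqP.
apply: (roots_geq_poly_eq0 (rs := [seq i%:R | i <- iota 0 (size (p - q))])).
- by apply/allP => y /mapP [i _ ->]; rewrite /root hornerD hornerN h subrr.
- by rewrite map_inj_uniq ?iota_uniq // => i j /eqP; rewrite eqr_nat => /eqP.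
- by rewrite size_map size_iota.
Qed.

Lemma size_prod_XaddC {R : nzRingType} (r : seq nat) (f : nat -> R) :
  (size (\prod_(j <- r) ('X + (f j)%:P))%R <= (size r).+1)%N.
Proof.
elim: r => [|j r IH]; first by rewrite big_nil size_poly1.
by rewrite big_cons; apply: leq_trans (size_polyMleq _ _) _; rewrite size_XaddC.
Qed.

Lemma size_cfac n : (size (cfac n) <= n.+1)%N.
Proof.
case: n => [|m]; first by rewrite /= size_poly1.
rewrite /cfac; apply: leq_trans (size_polyMleq _ _) _.
rewrite size_polyX /=; apply: leq_trans (size_prod_XaddC _ _) _.
by rewrite size_iota subn1.
Qed.

Definition cfac_cofactor (m : nat) (x : rat) : rat :=
  \prod_(i < m) (x + (m%:R - 1 - 2 * i%:R) / 2).

(* Shifting by +-1/2 drops the first or the last factor of the cofactor,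
   which yields the central factorial identities below. *)
Lemma horner_cfacS m x : (cfac m.+1).[x] = x * cfac_cofactor m x.
Proof.
rewrite /cfac hornerM hornerX horner_prod big_add1 /= big_mkord; congr (_ * _).
by apply: eq_bigr => i _; rewrite hornerD hornerX hornerC -?natr1; field.
Qed.

Lemma cfac_cofactor_up k x :
  cfac_cofactor k.+1 (x + 1/2) = (x + (k%:R + 1) / 2) * cfac_cofactor k x.
Proof.
rewrite /cfac_cofactor big_ord_recl /= -?natr1; congr (_ * _); first by field.
by apply: eq_bigr => i _; rewrite /bump /= -?natr1; field.
Qed.

Lemma cfac_cofactor_down k x :
  cfac_cofactor k.+1 (x - 1/2) = cfac_cofactor k x * (x - (k%:R + 1) / 2).
Proof.
rewrite /cfac_cofactor big_ord_recr /= -?natr1; congr (_ * _); last by field.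
by apply: eq_bigr => i _; rewrite -?natr1; field.
Qed.

Lemma cfac_cofactorSS k x : cfac_cofactor k.+2 x =
  (x + (k%:R + 1) / 2) * cfac_cofactor k x * (x - (k%:R + 1) / 2).
Proof.
rewrite /cfac_cofactor big_ord_recl big_ord_recr /= -mulrA; congr (_ * (_ * _)).
- by rewrite -?natr1; field.
- by apply: eq_bigr => i _; rewrite /bump /= -?natr1; field.
- by rewrite /bump /= -?natr1; field.
Qed.

Lemma diffop_cosh_cfac N k : (k.+2 <= N)%N ->
  'X * diffop N cosh_half (cfac k.+1) = cfac k.+2 + ((k%:R + 1) * k%:R / 4) *: cfac k.
Proof.
move=> hN; apply: poly_horner_inj => x.
rewrite hornerM hornerX diffop_cosh_horner; last exact: leq_trans (size_cfac _) hN.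
rewrite hornerD hornerZ !horner_cfacS.
case: k hN => [|j] _; first by rewrite /cfac_cofactor !big_ord0 big_ord1 /= hornerC; field.
by rewrite cfac_cofactor_up cfac_cofactor_down cfac_cofactorSS horner_cfacS -?natr1; field.
Qed.

(* 2 sinh(D/2) is the central difference: 2 sinh(D/2) x^{[k+1]} = (k+1) x^{[k]}. *)
Lemma diffop_sinh_cfac N k : (k.+2 <= N)%N ->
  diffop N sinh_half (cfac k.+1) = ((k%:R + 1) / 2) *: cfac k.
Proof.
move=> hN; apply: poly_horner_inj => x.
rewrite diffop_sinh_horner ?hornerZ ?horner_cfacS; last exact: leq_trans (size_cfac _) hN.
case: k hN => [|j] _; first by rewrite /cfac_cofactor !big_ord0 /= hornerC; field.
by rewrite cfac_cofactor_up cfac_cofactor_down horner_cfacS -?natr1; field.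
Qed.

Lemma size_sinv_seq a n : size (sinv_seq a n) = n.+1.
Proof. by elim: n => [|n IH] //=; rewrite size_rcons IH. Qed.

Lemma sinv_seq_prefix a n m i : (i <= n)%N -> (n <= m)%N ->
  nth 0 (sinv_seq a m) i = nth 0 (sinv_seq a n) i.
Proof.
move=> hi; elim: m => [|m IH] hm; first by move: hm; rewrite leqn0 => /eqP ->.
case: (ltngtP n m.+1) hm => // [hlt _|-> //].
by rewrite /= nth_rcons size_sinv_seq (leq_ltn_trans hi hlt); exact: IH.
Qed.

Lemma sinvS a m : sinv a m.+1 =
  - (a 0%N)^-1 * \sum_(i < m.+1) a i.+1 * sinv a (m - i)%N.
Proof.
rewrite /sinv /= nth_rcons size_sinv_seq ltnn eqxx; congr (_ * _).
apply: eq_bigr => i _; congr (_ * _).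
by apply: sinv_seq_prefix => //; exact: leq_subr.
Qed.

Lemma smul_sinv a k : a 0%N != 0 -> smul a (sinv a) k = (k == 0)%:R.
Proof.
move=> ha; case: k => [|m]; first by rewrite /smul big_ord1 /sinv /= mulfV.
rewrite /smul big_ord_recl /= subn0 sinvS mulrA mulrN mulfV // mulN1r.
rewrite addrC; apply/eqP; rewrite subr_eq0; apply/eqP.
by apply: eq_bigr => i _; rewrite subSS.
Qed.

Lemma cosh_half0 : cosh_half 0%N = 1.
Proof. by rewrite /cosh_half /= invr1. Qed.

Lemma sech_half0 : sech_half 0%N = 1.
Proof. by rewrite /sech_half /sinv /= cosh_half0 invr1. Qed.

Lemma sder_cosh k : sder cosh_half k = sinh_half k / 2.
Proof.
rewrite /sder /cosh_half /sinh_half /=; case: (odd k) => /=; last by rewrite mulr0 mul0r.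
rewrite expnS factS !natrM.
have h1 := fact_neq0 rat k; have h2 : (2 ^ k)%:R != 0 :> rat by rewrite pnatr_eq0 expn_eq0.
have h3 : (k.+1)%:R != 0 :> rat by rewrite pnatr_eq0.
by field; rewrite h1 h2 addrC natr1 h3.
Qed.

(* Truncations: identities between power series are checked coefficientwise
   below some order on their polynomial truncations, where ring tactics apply. *)
Definition trunc_series (N : nat) (a : series) : {poly rat} := \poly_(i < N) a i.
Definition agree (N : nat) (a : series) (p : {poly rat}) := forall i, (i < N)%N -> a i = p`_i.
Definition vanishes_below (N : nat) (p : {poly rat}) := forall i, (i < N)%N -> p`_i = 0.

Lemma agree_trunc N a : agree N a (trunc_series N a).
Proof. by move=> i hi; rewrite coef_poly hi. Qed.

Lemma agreeW N M a p : (M <= N)%N -> agree N a p -> agree M a p.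
Proof. by move=> hMN h i hi; apply: h; exact: leq_trans hi hMN. Qed.

Lemma agree_smul N a b p q : agree N a p -> agree N b q -> agree N (smul a b) (p * q).
Proof.
move=> ha hb i hi; rewrite coefM /smul; apply: eq_bigr => j _.
rewrite ha ?hb //; first exact: leq_ltn_trans (leq_subr _ _) hi.
by apply: leq_ltn_trans hi; rewrite -ltnS.
Qed.

Lemma agree_sder N a p : agree N.+1 a p -> agree N (sder a) p^`().
Proof. by move=> ha i hi; rewrite /sder coef_deriv ha // mulr_natl. Qed.

Lemma agree_scale N c a p : agree N a p -> agree N (fun k => c * a k) (c *: p).
Proof. by move=> ha i hi; rewrite coefZ ha. Qed.

Lemma vanishesD N p q : vanishes_below N p -> vanishes_below N q -> vanishes_below N (p + q).
Proof. by move=> hp hq i hi; rewrite coefD hp ?hq ?addr0. Qed.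

Lemma vanishesN N p : vanishes_below N p -> vanishes_below N (- p).
Proof. by move=> hp i hi; rewrite coefN hp ?oppr0. Qed.

Lemma vanishesMl N p q : vanishes_below N p -> vanishes_below N (q * p).
Proof.
move=> hp i hi; rewrite coefM big1 // => j _; rewrite hp ?mulr0 //.
exact: leq_ltn_trans (leq_subr _ _) hi.
Qed.

Lemma vanishesMr N p q : vanishes_below N p -> vanishes_below N (p * q).
Proof. by rewrite mulrC; exact: vanishesMl. Qed.

Lemma vanishes_deriv N p : vanishes_below N.+1 p -> vanishes_below N p^`().
Proof. by move=> hp i hi; rewrite coef_deriv hp // mul0rn. Qed.

Section HyperbolicODE.
Variable k : nat.
Let C := trunc_series k.+2 cosh_half.
Let S := trunc_series k.+2 sinh_half.
Let E := trunc_series k.+2 sech_half.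

Lemma hyperbolic_ode_coef h al H : agree k.+2 h H ->
    vanishes_below k.+1 (C * H^`() - al *: (S * H)) ->
  smul cosh_half (sder h) k = al * smul sinh_half h k.
Proof.
move=> hH hvan.
have hL : agree k.+1 (smul cosh_half (sder h)) (C * H^`()).
  by apply: agree_smul; [exact: agreeW (agree_trunc _ _) | exact: agree_sder].
have hR : agree k.+1 (fun j => al * smul sinh_half h j) (al *: (S * H)).
  by apply/agree_scale/agree_smul; [exact: agreeW (agree_trunc _ _) | exact: agreeW hH].
by rewrite hL // hR //; apply/eqP; rewrite -subr_eq0 -coefB hvan.
Qed.

Lemma cosh_deriv_trunc : vanishes_below k.+1 (C^`() - (1/2)%:P * S).
Proof.
move=> i hi; have hS : sinh_half i = S`_i by apply: agree_trunc; exact: leqW.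
rewrite coefB -(@agree_sder _ _ _ (agree_trunc k.+2 cosh_half)) // sder_cosh.
by rewrite mul_polyC coefZ -hS mulrC div1r subrr.
Qed.

Lemma cosh_sech_trunc : vanishes_below k.+2 (C * E - 1).
Proof.
move=> i hi.
rewrite coefB -(@agree_smul _ _ _ _ _ (agree_trunc _ cosh_half) (agree_trunc _ sech_half)) //.
by rewrite smul_sinv ?cosh_half0 ?oner_neq0 // coef1 subrr.
Qed.

(* Differentiating cosh * sech = 1: cosh sech' + (1/2) sinh sech = 0. *)
Lemma sech_ode_trunc : vanishes_below k.+1 (C * E^`() + (1/2)%:P * (S * E)).
Proof.
have -> : C * E^`() + (1/2)%:P * (S * E) =
          (C * E - 1)^`() - (C^`() - (1/2)%:P * S) * E.
  by rewrite derivB derivM -polyC1 derivC; ring.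
apply: vanishesD; first exact: vanishes_deriv cosh_sech_trunc.
by apply/vanishesN/vanishesMr; exact: cosh_deriv_trunc.
Qed.

Lemma sech_ode : smul cosh_half (sder sech_half) k = (- (1/2)) * smul sinh_half sech_half k.
Proof.
apply: hyperbolic_ode_coef (agree_trunc _ _) _.
have -> : C * E^`() - (- (1/2)) *: (S * E) = C * E^`() + (1/2)%:P * (S * E).
  by rewrite -mul_polyC; ring.
exact: sech_ode_trunc.
Qed.

Lemma sech3_ode :
  smul cosh_half (sder sech3_half) k = (- (3/2)) * smul sinh_half sech3_half k.
Proof.
have hE := agree_trunc k.+2 sech_half.
apply: (@hyperbolic_ode_coef sech3_half _ (E * (E * E))).
  by apply: agree_smul => //; exact: agree_smul.
(* (sech^3)' = 3 sech^2 sech', so the sech equation implies the sech^3 one. *)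
have -> : C * (E * (E * E))^`() - (- (3/2)) *: (S * (E * (E * E))) =
          (3%:R * (E * E)) * (C * E^`() + (1/2)%:P * (S * E)).
  by rewrite -mul_polyC !derivM; ring.
exact/vanishesMl/sech_ode_trunc.
Qed.

Lemma cosh_ode : smul cosh_half (sder cosh_half) k = (1/2) * smul sinh_half cosh_half k.
Proof.
apply: hyperbolic_ode_coef (agree_trunc _ _) _.
have -> : C * C^`() - (1/2) *: (S * C) = C * (C^`() - (1/2)%:P * S).
  by rewrite -mul_polyC; ring.
exact/vanishesMl/cosh_deriv_trunc.
Qed.
End HyperbolicODE.

(* If cosh(D/2) h' = al sinh(D/2) h, apply both sides to x^{[n+1]} at 0:
   the left side is h(D) (x cosh(D/2) x^{[n+1]}) and the right side is
   al h(D) (sinh(D/2) x^{[n+1]}), so the central factorial identities give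
   a two-term recurrence for h(D) 0^{[n]}. *)
Lemma cfac_recurrence h al :
    (forall k, smul cosh_half (sder h) k = al * smul sinh_half h k) ->
  forall n, opApply h n.+2 =
            (al * (n%:R + 1) / 2 - (n%:R + 1) * n%:R / 4) * opApply h n.
Proof.
move=> hode n.
have hsize m N : (m < N)%N -> (size (cfac m) <= N)%N := leq_trans (size_cfac m).
have e : evalD0 n.+2 (smul cosh_half (sder h)) (cfac n.+1) =
         evalD0 n.+2 (fun j => al * smul sinh_half h j) (cfac n.+1).
  by apply: eq_bigr => k _; rewrite hode.
rewrite evalD0_scale !evalD0_smul ?size_cfac // evalD0_sder in e.
rewrite diffop_cosh_cfac // diffop_sinh_cfac // evalD0D !evalD0Z in e.
rewrite !evalD0_cfac in e; try by apply: hsize; lia.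
apply: (addIr (((n%:R + 1) * n%:R / 4) * opApply h n)); rewrite e; ring.
Qed.

Lemma opApply0 h : opApply h 0 = h 0%N.
Proof. by rewrite /opApply /tcf /= size_poly1 big_ord1 coef1 /= !mulr1. Qed.

Definition central_value (nu : nat) : rat :=
  (((2 * nu)`!)%:R / 2 ^+ (2 * nu)) * gbinom (- (3%:R / 2)) nu.

Lemma gbinomS a n : gbinom a n.+1 = gbinom a n * (a - n%:R) / (n%:R + 1).
Proof.
rewrite /gbinom big_ord_recr /= factS natrM -natr1.
have h1 := fact_neq0 rat n; have h2 : n%:R + 1 != 0 :> rat by rewrite natr1 pnatr_eq0.
by field; rewrite h1 h2.
Qed.

Lemma central_value0 : central_value 0 = 1.
Proof. by rewrite /central_value /gbinom big_ord0 /= expr0 muln0 fact0 mulr1n divr1. Qed.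

Lemma central_valueS nu :
  central_value nu.+1 = central_value nu * (- ((2 * nu%:R + 1) * (2 * nu%:R + 3)) / 4).
Proof.
rewrite /central_value mulnS gbinomS !factS !natrM !exprS -!natr1 natrM.
have h2 : nu%:R + 1 != 0 :> rat by rewrite natr1 pnatr_eq0.
have h3 : (2 : rat) ^+ (2 * nu) != 0 by rewrite expf_neq0.
by field; rewrite h3 h2.
Qed.

Lemma sech3_even nu : opApply sech3_half (2 * nu)%N = central_value nu.
Proof.
elim: nu => [|nu IH].
  by rewrite muln0 opApply0 central_value0 /sech3_half /smul /= !big_ord1 sech_half0 !mulr1.
by rewrite mulnS (cfac_recurrence _ _ sech3_ode) central_valueS -IH natrM; field.
Qed.

Lemma sech_even nu : (2 * nu%:R + 1) * opApply sech_half (2 * nu)%N = central_value nu.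
Proof.
elim: nu => [|nu IH]; first by rewrite muln0 opApply0 central_value0 sech_half0; ring.
by rewrite mulnS (cfac_recurrence _ _ sech_ode) central_valueS -IH natrM -!natr1; field.
Qed.

Lemma cosh_even nu : 4 * opApply cosh_half (2 * nu).+2 = central_value nu.
Proof.
elim: nu => [|nu IH].
  by rewrite (cfac_recurrence _ _ cosh_ode) opApply0 cosh_half0 central_value0; field.
by rewrite mulnS (cfac_recurrence _ _ cosh_ode) central_valueS -IH -!natr1 natrM; field.
Qed.

(* tanh(D/2) 0^{[2 nu + 1]} = sech(D/2) (sinh(D/2) 0^{[2 nu + 1]})
   = (2 nu + 1)/2 sech(D/2) 0^{[2 nu]}. *)
Lemma tanh_odd nu : 2 * opApply tanh_half (2 * nu).+1 =
                    (2 * nu%:R + 1) * opApply sech_half (2 * nu)%N.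
Proof.
rewrite -(@evalD0_cfac (2 * nu).+2) ?size_cfac // /tanh_half evalD0_smul ?size_cfac //.
rewrite diffop_sinh_cfac // evalD0Z evalD0_cfac; last exact: leq_trans (size_cfac _) _.
by rewrite natrM; field.
Qed.

Lemma sum_pairs (F : nat -> rat) m :
  \sum_(k < 2 * m) F k = \sum_(k < m) (F (2 * k)%N + F (2 * k).+1).
Proof.
elim: m => [|m IH]; first by rewrite muln0 !big_ord0.
by rewrite mulnS !big_ord_recr /= IH addrA.
Qed.

(* cosh(D/2) 0^{[2 nu + 2]} only sees the even coefficients t(2 nu + 2, 2k), k >= 1. *)
Lemma cosh_even_sum nu :
  \sum_(1 <= k < nu.+2) (2 ^+ (2 * k))^-1 * tcf (2 * nu).+2 (2 * k)%N
  = opApply cosh_half (2 * nu).+2.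
Proof.
rewrite -(@evalD0_cfac (2 * nu.+2)); last by apply: leq_trans (size_cfac _) _; lia.
rewrite /evalD0 (sum_pairs (fun k => cosh_half k * (k`!)%:R * (cfac (2 * nu).+2)`_k)).
rewrite big_ord_recl /= big_add1 /= big_mkord.
have -> : (cfac (2 * nu).+2)`_0 = 0 by rewrite /cfac coefXM.
have -> : cosh_half 1 = 0 by [].
rewrite muln0 mulr0 mul0r !add0r; apply: eq_bigr => k _; rewrite /bump leq0n add1n.
have he : odd (2 * k.+1) = false by rewrite oddM.
have ho : odd (2 * k.+1).+1 by rewrite oddS he.
rewrite /cosh_half (ifF _ _ he) (ifT _ _ ho) !mul0r addr0 natrM natrX invfM.
by rewrite divfK ?fact_neq0.
Qed.

Theorem mainTheorem7 (nu : nat) :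
  opApply sech3_half (2 * nu)%N = 2 * opApply tanh_half (2 * nu).+1 /\
  2 * opApply tanh_half (2 * nu).+1 = 4 * opApply cosh_half (2 * nu).+2 /\
  4 * (\sum_(1 <= k < nu.+2) (2 ^+ (2 * k))^-1 * tcf (2 * nu).+2 (2 * k)%N)
    = (((2 * nu)`!)%:R / 2 ^+ (2 * nu)) * gbinom (- (3%:R / 2)) nu.
Proof.
have tanh_value : 2 * opApply tanh_half (2 * nu).+1 = central_value nu.
  by rewrite tanh_odd sech_even.
rewrite sech3_even tanh_value cosh_even_sum cosh_even.
by split; [|split].
Qed.
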